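(* Let $\{\mathcal{F}_n\}_{n\ge0}$ be a filtration of sub-$\sigma$-fields of $\mathcal{F}$, let $X\in L^\infty$, and let $\{X_n\}_{n\ge0}$ satisfy $X_n\in\mathbb{E}[X\mid\mathcal{F}_n]$ for all $n$. If $X$ lies in the $\|\cdot\|_\infty$-closure of $\bigcup_{n\ge1}L^\infty(\mathcal{F}_n)$, then $\lim_{n\to\infty}\|X_n-X\|_\infty=0$; in particular $X_n\to X$ almost surely.
   Context: $\mathbb{K}$ is a local field with non-archimedean absolute value $|\cdot|$ satisfying $|x|=0 \iff x=0$, $|xy|=|x||y|$, $|x+y|\le|x|\vee|y|$. $(\Omega,\mathcal{F},\mathbb{P})$ is a probability space; all (in)equalities are a.s. $L^\infty$ is the space of $\mathbb{K}$-valued random variables $X$ with $\|X\|_\infty:=\operatorname{ess\,sup}|X|<\infty$ (identified a.s.); $L^\infty(\mathcal{G})$ its $\mathcal{G}$-measurable subspace. For a non-negative real random variable $S$, $\operatorname{ess\,sup}\{S\mid\mathcal{G}\}:=\sup_{p\ge1}\mathbb{E}[S^p\mid\mathcal{G}]^{1/p}$ (usual real conditional expectation), $\|X\|_\mathcal{G}:=\operatorname{ess\,sup}\{|X|\mid\mathcal{G}\}$, and the conditional expectation is the set $\mathbb{E}[X\mid\mathcal{G}]:=\{Y\in L^\infty(\mathcal{G}): \|X-Y\|_\mathcal{G}\le\|X-Z\|_\mathcal{G}\text{ for all }Z\in L^\infty(\mathcal{G})\}$. A filtration is a non-decreasing sequence of sub-$\sigma$-fields. *)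

From mathcomp Require Import all_boot all_order all_algebra.
From mathcomp Require Import all_classical all_reals all_analysis.
From mathcomp Require Import ess_sup_inf.
Set Implicit Arguments.
Unset Strict Implicit.
Unset Printing Implicit Defensive.
Import Order.TTheory GRing.Theory Num.Def Num.Theory.
Import numFieldNormedType.Exports.
Local Open Scope classical_set_scope.
Local Open Scope ring_scope.

Section LocalField.
Variables (R : realType) (K : fieldType) (absK : K -> R).

(** [absK] is a non-archimedean absolute value and (K, absK) is a
    (non-archimedean) local field: the absolute value is non-trivial,
    K is complete and locally compact (closed unit ball totally bounded). *)
Record is_local_field : Prop := IsLocalField {
  absK_ge0 : forall x, 0 <= absK x;
  absK_eq0 : forall x, absK x = 0 <-> x = 0;
  absKM : forall x y, absK (x * y) = absK x * absK y;
  absK_ultra : forall x y, absK (x + y) <= Num.max (absK x) (absK y);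
  absK_nontrivial : exists x, absK x != 0 /\ absK x != 1;
  absK_complete : forall u : nat -> K,
    (forall e, 0 < e -> exists N, forall m n, (N <= m)%N -> (N <= n)%N ->
        absK (u m - u n) < e) ->
    exists l, forall e, 0 < e -> exists N, forall n, (N <= n)%N -> absK (u n - l) < e;
  absK_loc_compact : forall e, 0 < e -> exists s : seq K,
    forall x, absK x <= 1 -> exists2 y, y \in s & absK (x - y) < e
}.
End LocalField.

Section Probability.
Context {d : measure_display} {T : measurableType d} {R : realType}.
Variables (P : probability T R) (K : fieldType) (absK : K -> R).

Definition sub_sigma_field (G : set (set T)) :=
  sigma_algebra setT G /\ (forall A, G A -> measurable A).

(** G-measurability of a K-valued map: preimages of open balls lie in G
    (the balls generate the Borel sigma-field of the separable space K). *)
Definition Kmeasurable (G : set (set T)) (X : T -> K) :=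
  forall (a : K) (r : R), G (X @^-1` [set x | absK (x - a) < r]).

Definition Rmeasurable (G : set (set T)) (Y : T -> R) :=
  forall a : R, G (Y @^-1` [set y | y < a]).

Definition Linfnorm (X : T -> K) : \bar R :=
  ess_sup P (fun w => (absK (X w))%:E).

Definition Linf (G : set (set T)) (X : T -> K) :=
  Kmeasurable G X /\ (Linfnorm X < +oo)%E.

Definition is_cond_exp (G : set (set T)) (S Y : T -> R) :=
  Rmeasurable G Y /\ P.-integrable setT (fun w => (Y w)%:E) /\
  forall A, G A -> (\int[P]_(w in A) (S w)%:E = \int[P]_(w in A) (Y w)%:E)%E.

(** M is a version of ess sup {S | G} = sup_{p >= 1} E[S^p | G]^(1/p)
    (p ranging over the integers p >= 1, written p = q.+1). *)
Definition is_cond_esssup (G : set (set T)) (S : T -> R) (M : T -> \bar R) :=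
  exists Y : nat -> T -> R,
    (forall q, is_cond_exp G (fun w => S w ^+ q.+1) (Y q)) /\
    {ae P, forall w, M w = ereal_sup [set ((Y q w) `^ (q.+1%:R)^-1)%:E | q in [set: nat]]}.

Definition is_cond_norm (G : set (set T)) (X : T -> K) (M : T -> \bar R) :=
  is_cond_esssup G (fun w => absK (X w)) M.

Definition in_cond_exp (G : set (set T)) (X Y : T -> K) :=
  Linf G Y /\
  forall Z, Linf G Z -> forall M1 M2,
    is_cond_norm G (fun w => X w - Y w) M1 ->
    is_cond_norm G (fun w => X w - Z w) M2 ->
    {ae P, forall w, (M1 w <= M2 w)%E}.

End Probability.

From HB Require Import structures.
From mathcomp Require Import all_boot all_order all_algebra.
From mathcomp Require Import all_classical all_reals all_analysis.
From mathcomp Require Import ess_sup_inf measurable_realfun.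
From mathcomp.algebra_tactics Require Import lra.
Import Order.TTheory GRing.Theory Num.Def Num.Theory.
Import numFieldNormedType.Exports.
Local Open Scope classical_set_scope.
Local Open Scope ring_scope.
Set Implicit Arguments.
Unset Strict Implicit.

(* Let Y be in E[X | G], Z in L^oo(G) and b := ||X - Z||_oo. Every conditional
   moment E[|X - Z|^p | G] is at most b^p, so ||X - Z||_G <= b, and by the
   minimality of Y also ||X - Y||_G <= b. Taking expectations,
   E[|X - Y|^p] <= b^p for every p, hence P(|X - Y| > b + e) <= (b/(b+e))^p
   for all p, i.e. ||X - Y||_oo <= ||X - Z||_oo. Since F_m is contained in F_n
   for m <= n, choosing Z in L^oo(F_m) within e of X gives ||X_n - X||_oo <= e
   for all n >= m, and |X_n - X| <= ||X_n - X||_oo holds a.s. for all n at once.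
   The conditional moments exist by Radon-Nikodym; the measurability of
   |X - Z| comes from the separability of the local field (the rescaled finite
   e-nets of its unit ball form a countable dense set). *)

Section AbsoluteValue.
Variables (R : realType) (K : fieldType) (absK : K -> R).
Hypothesis lf : is_local_field absK.

Lemma absK0 : absK 0 = 0.
Proof. exact/(absK_eq0 lf). Qed.

Lemma absK_neq0 x : x != 0 -> absK x != 0.
Proof. by apply: contra => /eqP/(absK_eq0 lf) ->. Qed.

Lemma absK1 : absK 1 = 1.
Proof.
apply: (mulfI (absK_neq0 (oner_neq0 K))).
by rewrite -(absKM lf) !mulr1.
Qed.

Lemma absKV x : absK x^-1 = (absK x)^-1.
Proof.
have [->|x0] := eqVneq x 0; first by rewrite invr0 absK0 invr0.
apply: (mulfI (absK_neq0 x0)).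
by rewrite -(absKM lf) !mulfV ?absK1 ?absK_neq0.
Qed.

Lemma absKX x n : absK (x ^+ n) = absK x ^+ n.
Proof.
elim: n => [|n IH]; first by rewrite !expr0 absK1.
by rewrite !exprS (absKM lf) IH.
Qed.

Lemma absKN x : absK (- x) = absK x.
Proof.
have absKN1 : absK (-1) = 1.
  have := absKM lf (-1) (-1); rewrite mulrNN mulr1 absK1.
  have := absK_ge0 lf (-1); nra.
by rewrite -mulN1r (absKM lf) absKN1 mul1r.
Qed.

Lemma absK_subC x y : absK (x - y) = absK (y - x).
Proof. by rewrite -absKN opprB. Qed.

Lemma absK_sub_ultra x y z :
  absK (x - z) <= Num.max (absK (x - y)) (absK (y - z)).
Proof. by have := absK_ultra lf (x - y) (y - z); rewrite addrA subrK. Qed.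

Lemma exists_absK_gt1 : exists c, 1 < absK c.
Proof.
have [x [x0 x1]] := absK_nontrivial lf.
have [lt1|ge1] := ltP (absK x) 1; last by exists x; rewrite lt_neqAle eq_sym x1.
exists x^-1; rewrite absKV invf_gt1 // lt_neqAle eq_sym x0.
exact: absK_ge0 lf x.
Qed.

End AbsoluteValue.

Lemma expr_ge_bernoulli (R : realFieldType) (a : R) (k : nat) : 1 <= a ->
  1 + k%:R * (a - 1) <= a ^+ k.
Proof.
move=> a1; elim: k => [|k IH]; first by rewrite mul0r addr0 expr0.
have h0 : 0 <= a - 1 by lra.
have : a * (1 + k%:R * (a - 1)) <= a ^+ k.+1 by rewrite exprS ler_wpM2l //; lra.
have := mulr_ge0 (ler0n R k) (mulr_ge0 h0 h0).
rewrite -natr1; nra.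
Qed.

Lemma expr_unbounded (R : archiRealFieldType) (a z : R) : 1 < a ->
  exists k : nat, z <= a ^+ k.
Proof.
move=> a1; have a10 : 0 < a - 1 by lra.
have /archi_boundP := divr_ge0 (normr_ge0 z) (ltW a10).
set k := archi_bound _ => hk; exists k.
have := expr_ge_bernoulli k (ltW a1).
rewrite ltr_pdivrMr // in hk.
have := ler_norm z; lra.
Qed.

Section Separability.
Variables (R : realType) (K : fieldType) (absK : K -> R).
Hypothesis lf : is_local_field absK.

Lemma countable_dense_absK : exists D : nat -> nat -> nat -> K,
  forall z r, 0 < r -> exists k j i, absK (z - D k j i) < r.
Proof.
have [c c1] := exists_absK_gt1 lf.
have /choice [s hs] : forall j : nat, exists s : seq K, forall x, absK x <= 1 ->
    exists2 y, y \in s & absK (x - y) < j.+1%:R^-1.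
  by move=> j; apply: (absK_loc_compact lf).
exists (fun k j i => c ^+ k * nth 0 (s j) i) => z r r0.
have [k hk] := expr_unbounded (absK z) c1.
have ck0 : c ^+ k != 0.
  by apply: expf_neq0; apply: contraTneq c1 => ->; rewrite absK0 // ltr10.
set a := absK c ^+ k in hk.
have a0 : 0 < a by apply: exprn_gt0; lra.
have [j hj] : exists j : nat, a * j.+1%:R^-1 < r.
  have /archi_boundP := divr_ge0 (ltW a0) (ltW r0).
  set j := archi_bound _ => hj; exists j.
  rewrite ltr_pdivrMr // mulrC -ltr_pdivrMr //.
  by apply: lt_le_trans hj _; rewrite ler_nat.
have zk1 : absK ((c ^+ k)^-1 * z) <= 1.
  by rewrite (absKM lf) absKV // absKX // ler_pdivrMl // mulr1.
have [y ys hy] := hs j _ zk1.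
exists k, j, (index y (s j)); rewrite nth_index //.
rewrite -{1}(mulVKf ck0 z) -mulrBr (absKM lf) absKX // -/a.
by apply: le_lt_trans hj; rewrite ler_wpM2l ?ltW.
Qed.

End Separability.

Lemma measurable_fun_ltr_preimage d (T : measurableType d) (R : realType)
    (f : T -> R) :
  (forall a, measurable [set w | f w < a]) -> measurable_fun setT f.
Proof.
move=> hf; apply: (measurability _ (RGenInftyO.measurableE R)) => //.
by move=> _ [_ [a ->] <-]; rewrite setTI; exact: hf.
Qed.

Lemma measurable_gtr d (T : measurableType d) (R : realType) (f : T -> R) c :
  measurable_fun setT f -> measurable [set w | c < f w].
Proof.
move=> mf; have := mf measurableT _ (measurable_itv `]c, +oo[); rewrite setTI.
by congr measurable; apply/seteqP; split => w /=; rewrite in_itv /= andbT.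
Qed.

Section MeasurableDistance.
Variables (R : realType) (K : fieldType) (absK : K -> R).
Hypothesis lf : is_local_field absK.
Context (d : measure_display) (T : measurableType d).

Lemma Kmeasurable_subset (G1 G2 : set (set T)) (X : T -> K) :
  G1 `<=` G2 -> Kmeasurable absK G1 X -> Kmeasurable absK G2 X.
Proof. by move=> G12 mX a r; apply: G12. Qed.

(* In an ultrametric space two points lie in a common ball of radius r iff
   their distance is < r, so a countable dense set of centres suffices. *)
Lemma absK_sub_ltE (D : nat -> nat -> nat -> K)
    (hD : forall z r, 0 < r -> exists k j i, absK (z - D k j i) < r)
    (X Y : T -> K) (r : R) :
  [set w | absK (X w - Y w) < r] =
  \bigcup_k \bigcup_j \bigcup_i
    (X @^-1` [set x | absK (x - D k j i) < r] `&`
     Y @^-1` [set x | absK (x - D k j i) < r]).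
Proof.
apply/seteqP; split => w /=.
- move=> XYr; have r0 : 0 < r := le_lt_trans (absK_ge0 lf _) XYr.
  have [k [j [i XDr]]] := hD (X w) r r0.
  exists k => //; exists j => //; exists i => //; split => //=.
  apply: le_lt_trans (absK_sub_ultra lf (Y w) (X w) (D k j i)) _.
  by rewrite gt_max XDr andbT absK_subC.
- move=> [k _ [j _ [i _ [/= XDr YDr]]]].
  apply: le_lt_trans (absK_sub_ultra lf (X w) (D k j i) (Y w)) _.
  by rewrite gt_max XDr absK_subC.
Qed.

Lemma measurable_absK_sub (X Y : T -> K) :
  Kmeasurable absK measurable X -> Kmeasurable absK measurable Y ->
  measurable_fun setT (fun w => absK (X w - Y w)).
Proof.
move=> mX mY; have [D hD] := countable_dense_absK lf.
apply: measurable_fun_ltr_preimage => r; rewrite (absK_sub_ltE hD).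
do 3 apply: bigcupT_measurable => ?.
by apply: measurableI; [exact: mX | exact: mY].
Qed.

End MeasurableDistance.

Section ConditionalExpectation.
Context (d : measure_display) (T : measurableType d) (R : realType).
Variables (P : probability T R) (G : set (set T)).
Hypothesis hG : sub_sigma_field G.

Local Notation TG := (g_sigma_algebraType G).

Lemma measurableG (A : set TG) : measurable A = G A.
Proof. by rewrite (measurable_g_measurableTypeE hG.1). Qed.

Lemma measurableG_sub (A : set TG) : measurable A -> measurable (A : set T).
Proof. by rewrite measurableG => /(hG.2). Qed.

Lemma G_setT : G setT.
Proof. by rewrite -measurableG. Qed.

Definition idG : T -> TG := id.

Lemma measurable_idG : measurable_fun setT idG.
Proof. by move=> _ A mA; rewrite setTI; exact: measurableG_sub. Qed.

Lemma measurable_funG_sub d' (V : measurableType d') (g : TG -> V) :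
  measurable_fun setT g -> measurable_fun (setT : set T) g.
Proof. by move=> mg; exact: measurableT_comp mg measurable_idG. Qed.

Lemma RmeasurableP (Y : T -> R) :
  Rmeasurable G Y <-> measurable_fun (setT : set TG) Y.
Proof.
split=> [GY | mY a].
  by apply: measurable_fun_ltr_preimage => a; rewrite measurableG; exact: GY.
rewrite -measurableG; have := mY measurableT _ (measurable_itv `]-oo, a[).
by rewrite setTI; congr measurable; apply/seteqP; split => w /=; rewrite in_itv.
Qed.

Local Open Scope ereal_scope.

Let muG : set TG -> \bar R := fun A => P (A : set T).

Let muG0 : muG set0 = 0. Proof. exact: measure0. Qed.
Let muG_ge0 A : 0 <= muG A. Proof. exact: measure_ge0. Qed.
Let muG_sigma : semi_sigma_additive muG.
Proof.
move=> F mF tF mUF; apply: (measure_semi_sigma_additive (F : nat -> set T)).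
- by move=> n; exact: measurableG_sub.
- exact: tF.
- exact: measurableG_sub.
Qed.

HB.instance Definition _ := isMeasure.Build _ TG R muG muG0 muG_ge0 muG_sigma.

Let muG_fin : fin_num_fun muG.
Proof.
move=> A mA; rewrite ge0_fin_numE //; apply: le_lt_trans (ltey 1).
exact/probability_le1/measurableG_sub.
Qed.

HB.instance Definition _ := Measure_isFinite.Build _ TG R muG muG_fin.

Let aeG_sub (Q : T -> Prop) : (\forall x \ae muG, Q x) -> \forall x \ae P, Q x.
Proof.
move=> [N [mN N0 NQ]]; exists (N : set T); split => //.
exact: measurableG_sub.
Qed.

Variable S : T -> R.
Hypotheses (S_ge0 : forall w, (0 <= S w)%R) (mS : measurable_fun setT S)
  (iS : P.-integrable setT (fun w => (S w)%:E)).

Let mSE : measurable_fun setT (EFin \o S).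
Proof. exact/measurable_EFinP. Qed.

Let nuG : set TG -> \bar R := fun A => \int[P]_(w in (A : set T)) (S w)%:E.

Let nuG0 : nuG set0 = 0. Proof. exact: integral_set0. Qed.
Let nuG_ge0 A : 0 <= nuG A.
Proof. by apply: integral_ge0 => w _; rewrite lee_fin. Qed.
Let nuG_sigma : semi_sigma_additive nuG.
Proof.
move=> F mF tF mUF.
apply: (@semi_sigma_additive_nng_induced _ _ _ P _ mSE _ (F : nat -> set T)).
- by move=> w; rewrite lee_fin.
- by move=> n; exact: measurableG_sub.
- exact: tF.
- exact: measurableG_sub.
Qed.

HB.instance Definition _ := isMeasure.Build _ TG R nuG nuG0 nuG_ge0 nuG_sigma.

Let nuG_fin : fin_num_fun nuG.
Proof.
move=> A mA; rewrite ge0_fin_numE //.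
apply: (@le_lt_trans _ _ (\int[P]_(w in setT) (S w)%:E)).
  apply: ge0_subset_integral => //=; first exact: measurableG_sub.
  by move=> w _; rewrite lee_fin.
by have [_] := integrableP _ _ _ iS; under eq_integral do rewrite gee0_abs ?lee_fin//.
Qed.

HB.instance Definition _ := Measure_isFinite.Build _ TG R nuG nuG_fin.

Let nuG_dom : nuG `<< muG.
Proof.
apply/null_content_dominatesP => A mA muA.
by apply: null_set_integral => //; [exact: measurableG_sub | exact: measurable_funTS].
Qed.

(* The conditional expectation is the Radon-Nikodym derivative of
   A |-> \int_A S dP with respect to P, both restricted to G. *)
Lemma cond_exp_exists : exists Y : T -> R,
  is_cond_exp P G S Y /\ forall w, (0 <= Y w)%R.
Proof.
have [f [f0 intf fE]] := radon_nikodym_finite nuG_dom.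
have mf : measurable_fun (setT : set TG) f := measurable_int _ intf.
pose Y w := fine (f w).
have mY : measurable_fun (setT : set TG) Y.
  exact: measurableT_comp (fine_measurable measurableT) mf.
have fY : \forall w \ae P, setT w -> f w = (Y w)%:E.
  have := aeG_sub (integrable_ae measurableT intf).
  by apply: (@filterS _ _ (ae_filter_ringOfSetsType P)) => w fw /fw /fineK.
have SY A : G A -> \int[P]_(w in A) (S w)%:E = \int[P]_(w in A) (Y w)%:E.
  move=> GA; have mA : measurable (A : set TG) by rewrite measurableG.
  rewrite -/(nuG A) (fE A mA).
  (* [muG] is, up to conversion, the pushforward of [P] along [idG]. *)
  rewrite (ge0_integral_pushforward measurable_idG P mA (measurable_funTS mf)
    (fun y _ => f0 y)).
  apply: ae_eq_integral => //; [exact: measurableG_sub | | |].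
  - exact/measurable_funTS/measurable_funG_sub.
  - exact/measurable_funTS/measurable_EFinP/measurable_funG_sub.
  - exact: ae_eq_subset fY.
have Y0 w : (0 <= Y w)%R by exact: fine_ge0.
exists Y; split=> //; split; first exact/RmeasurableP.
split=> //; apply/integrableP; split.
  exact/measurable_EFinP/measurable_funG_sub.
under eq_integral do rewrite gee0_abs ?lee_fin//.
rewrite -SY; last exact: G_setT.
by have [_] := integrableP _ _ _ iS; under eq_integral do rewrite gee0_abs ?lee_fin//.
Qed.

End ConditionalExpectation.

Lemma le0_of_le_exprS (R : realType) (p r : R) : 0 <= r < 1 ->
  (forall n, p <= r ^+ n.+1) -> p <= 0.
Proof.
move=> /andP[r0 r1] pr.
have rn0 : r ^+ n @[n --> \oo] --> 0 by apply: cvg_expr; rewrite ger0_norm.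
rewrite -(cvg_lim _ rn0) //; apply: limr_ge; first exact: cvgP rn0.
apply: nearW => n; apply: le_trans (pr n) _.
by rewrite exprS ler_piMl ?exprn_ge0 // ltW.
Qed.

Lemma ler_powR_invS (R : realType) (y b : R) (q : nat) : 0 <= y -> 0 <= b ->
  (y `^ q.+1%:R^-1 <= b) = (y <= b ^+ q.+1).
Proof.
move=> y0 b0; have yE : (y `^ q.+1%:R^-1) ^+ q.+1 = y.
  by rewrite -powR_mulrn ?powR_ge0 // -powRrM mulVf // powRr1.
by rewrite -[X in _ = (X <= _)]yE ler_pXn2r // nnegrE powR_ge0.
Qed.

Section Moments.
Context (d : measure_display) (T : measurableType d) (R : realType).
Variable P : probability T R.
Local Open Scope ereal_scope.

Lemma ae_le_of_null_gt (S : T -> R) (b : R) : measurable_fun setT S ->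
  (forall e, (0 < e)%R -> P [set w | (b + e < S w)%R] = 0) ->
  \forall w \ae P, (S w <= b)%R.
Proof.
move=> mS null.
have Sn n : \forall w \ae P, (S w <= b + n.+1%:R^-1)%R.
  exists [set w | (b + n.+1%:R^-1 < S w)%R]; split.
  - exact: measurable_gtr.
  - exact: null.
  - by move=> w /= /negP; rewrite -ltNge.
apply: filterS (ae_foralln Sn) => w Swn; apply/ler_addgt0Pr => e e0.
have [N _ Ne] := near_infty_natSinv_lt (PosNum e0).
apply: le_trans (Swn N) _; rewrite lerD2l; apply/ltW/Ne; exact: leqnn.
Qed.

Lemma mul_measure_le_integral (A : set T) (f : T -> R) (c : R) :
  measurable A -> measurable_fun setT f -> (0 <= c)%R ->
  (forall w, A w -> (c <= f w)%R) -> c%:E * P A <= \int[P]_(w in A) (f w)%:E.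
Proof.
move=> mA mf c0 cf; rewrite -integral_cst //.
by apply: ge0_le_integral => //; exact/measurable_EFinP/measurable_funTS.
Qed.

Lemma cond_exp_le (G : set (set T)) (S Y : T -> R) (b : R) :
  sub_sigma_field G -> is_cond_exp P G S Y -> measurable_fun setT S ->
  (forall w, 0 <= S w)%R -> (0 <= b)%R ->
  (\forall w \ae P, (S w <= b)%R) -> \forall w \ae P, (Y w <= b)%R.
Proof.
move=> hG [GY [_ SY]] mS S0 b0 Sb.
have mYG := (RmeasurableP hG Y).1 GY.
apply: ae_le_of_null_gt => [|e e0]; first exact: measurable_funG_sub mYG.
set A := [set w | _].
have GA : G A by rewrite -(measurableG hG); exact: measurable_gtr.
have mA : measurable A := hG.2 _ GA.
have PAf : P A \is a fin_num by rewrite fin_num_measure.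
have : (b + e)%:E * P A <= b%:E * P A.
  apply: le_trans (mul_measure_le_integral mA (measurable_funG_sub hG mYG) _ _) _.
  - by apply: addr_ge0 => //; exact: ltW.
  - by move=> w /ltW.
  rewrite -SY // -integral_cst //; apply: ae_ge0_le_integral => //.
  - by move=> w _; rewrite lee_fin.
  - exact/measurable_EFinP/measurable_funTS.
  - by apply: filterS Sb => w Swb _; rewrite lee_fin.
rewrite -(fineK PAf) -!EFinM lee_fin => PAle.
have := fine_ge0 (measure_ge0 P A).
by move=> PA0; congr EFin; nra.
Qed.

Lemma ae_le_of_moments_le (S : T -> R) (b : R) : measurable_fun setT S ->
  (forall w, 0 <= S w)%R -> (0 <= b)%R ->
  (forall q, \int[P]_(w in setT) (S w ^+ q.+1)%:E <= (b ^+ q.+1)%:E) ->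
  \forall w \ae P, (S w <= b)%R.
Proof.
move=> mS S0 b0 moments; apply: ae_le_of_null_gt => // e e0.
set A := [set w | _]; have mA : measurable A := measurable_gtr _ mS.
have PAf : P A \is a fin_num by rewrite fin_num_measure.
have be0 : (0 < b + e)%R by rewrite ltr_wpDl.
have PA_le q : (fine (P A) <= (b / (b + e)) ^+ q.+1)%R.
  rewrite expr_div_n ler_pdivlMr ?exprn_gt0 // mulrC -lee_fin EFinM fineK //.
  have mSq := measurable_funX q.+1 mS.
  apply: le_trans (moments q).
  apply: le_trans (mul_measure_le_integral mA mSq _ _) _.
  - exact: exprn_ge0 (ltW be0).
  - by move=> w /ltW Aw; apply: lerXn2r; rewrite ?nnegrE ?S0 ?(ltW be0).
  apply: ge0_subset_integral => //; first exact/measurable_EFinP.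
  by move=> w _; rewrite lee_fin exprn_ge0.
have r01 : (0 <= b / (b + e) < 1)%R.
  apply/andP; split; first by rewrite divr_ge0 // ltW.
  by rewrite ltr_pdivrMr // mul1r ltr_pwDr.
apply/eqP; rewrite -(fineK PAf) eqe eq_le (le0_of_le_exprS r01 PA_le) /=.
by rewrite fine_ge0 ?measure_ge0.
Qed.

Let integral_cstT (c : \bar R) : \int[P]_(w in setT) (cst c) w = c.
Proof.
by rewrite integral_cst // (_ : _ [set: T] = 1) ?mule1 //; exact: probability_setT.
Qed.

Lemma integrable_exprn_bounded (S : T -> R) (c : R) n :
  measurable_fun setT S -> (forall w, 0 <= S w)%R ->
  (\forall w \ae P, (S w <= c)%R) -> P.-integrable setT (fun w => (S w ^+ n)%:E).
Proof.
move=> mS S0 Sc; have mSn := measurable_funX n mS.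
apply/integrableP; split; first exact/measurable_EFinP.
apply: (@le_lt_trans _ _ (\int[P]_(w in setT) (cst (`|c| ^+ n)%:E) w)).
  apply: ae_ge0_le_integral => //.
  - by apply: measurableT_comp => //; exact/measurable_EFinP.
  - by move=> w _; rewrite lee_fin exprn_ge0.
  apply: filterS Sc => w Swc _.
  rewrite /= lee_fin ger0_norm ?exprn_ge0 //.
  apply: lerXn2r; rewrite ?nnegrE ?S0 //.
  exact: le_trans Swc (ler_norm c).
by rewrite integral_cstT ltry.
Qed.

Section ConditionalEssentialSupremum.
Variables (G : set (set T)) (S : T -> R).
Hypotheses (hG : sub_sigma_field G) (mS : measurable_fun setT S)
  (S_ge0 : forall w, (0 <= S w)%R).

Definition cond_esssup_of (Ys : nat -> T -> R) (w : T) : \bar R :=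
  ereal_sup [set ((Ys q w) `^ q.+1%:R^-1)%:E | q in [set: nat]].

Lemma cond_esssup_exists (c : R) : (\forall w \ae P, (S w <= c)%R) ->
  exists Ys : nat -> T -> R,
  [/\ forall q, is_cond_exp P G (fun w => S w ^+ q.+1)%R (Ys q),
      (forall q w, 0 <= Ys q w)%R & is_cond_esssup P G S (cond_esssup_of Ys)].
Proof.
move=> Sc; have /choice [Ys ceYs] : forall q, exists Y : T -> R,
    is_cond_exp P G (fun w => S w ^+ q.+1)%R Y /\ forall w, (0 <= Y w)%R.
  move=> q; have Sq_ge0 w : (0 <= S w ^+ q.+1)%R by exact: exprn_ge0.
  exact: (cond_exp_exists (P := P) hG Sq_ge0 (measurable_funX q.+1 mS)
    (integrable_exprn_bounded q.+1 mS S_ge0 Sc)).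
exists Ys; split => [q|q|]; [exact: (ceYs q).1 | exact: (ceYs q).2 |].
by exists Ys; split => [q|]; [exact: (ceYs q).1 | exact: aeW].
Qed.

Variables (Ys : nat -> T -> R) (b : R).
Hypotheses (b0 : (0 <= b)%R) (Ys_ge0 : forall q w, (0 <= Ys q w)%R)
  (ceYs : forall q, is_cond_exp P G (fun w => S w ^+ q.+1)%R (Ys q)).

Lemma cond_esssup_le : (\forall w \ae P, (S w <= b)%R) ->
  \forall w \ae P, cond_esssup_of Ys w <= b%:E.
Proof.
move=> Sb; have Ysb q : \forall w \ae P, (Ys q w <= b ^+ q.+1)%R.
  apply: cond_exp_le hG (ceYs q) (measurable_funX _ mS) _ (exprn_ge0 _ b0) _.
  - by move=> w; exact: exprn_ge0.
  - by apply: filterS Sb => w Swb; apply: lerXn2r; rewrite ?nnegrE ?S_ge0.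
apply: filterS (ae_foralln Ysb) => w Yswb.
by apply: ge_ereal_sup => _ [q _ <-]; rewrite lee_fin ler_powR_invS.
Qed.

Lemma moments_le_of_cond_esssup_le :
  (\forall w \ae P, cond_esssup_of Ys w <= b%:E) ->
  forall q, \int[P]_(w in setT) (S w ^+ q.+1)%:E <= (b ^+ q.+1)%:E.
Proof.
move=> Mb q; have [GY [_ SY]] := ceYs q.
have mY := measurable_funG_sub hG ((RmeasurableP hG _).1 GY).
rewrite SY; last exact: G_setT hG.
rewrite -[(b ^+ q.+1)%:E]integral_cstT.
apply: ae_ge0_le_integral => //.
- by move=> w _; rewrite lee_fin.
- exact/measurable_EFinP.
- by move=> w _; rewrite lee_fin exprn_ge0.
apply: filterS Mb => w Mwb _; rewrite lee_fin -ler_powR_invS //.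
by rewrite -lee_fin; apply: le_trans Mwb; apply: ereal_sup_ubound; exists q.
Qed.

End ConditionalEssentialSupremum.

End Moments.

Lemma ecvg0_ge0 (R : realType) (u : nat -> \bar R) : (forall n, 0 <= u n)%E ->
  (forall e : R, 0 < e -> \forall n \near \oo, (u n < e%:E)%E) ->
  u n @[n --> \oo] --> 0%E.
Proof.
move=> u0 ulte; have ufin : \forall n \near \oo, u n \is a fin_num.
  apply: filterS (ulte 1 ltr01) => n un1.
  by rewrite ge0_fin_numE // (lt_trans un1) ?ltry.
apply/fine_cvgP; split => //.
apply/cvgr0Pnorm_lt => e e0; apply: filterS2 ufin (ulte e e0) => n ufn une.
by rewrite ger0_norm ?fine_ge0 // -lte_fin fineK.
Qed.

Section EssentialSupremumNorm.
Variables (R : realType) (K : fieldType) (absK : K -> R).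
Hypothesis lf : is_local_field absK.
Context (d : measure_display) (T : measurableType d).
Variable P : probability T R.
Local Open Scope ereal_scope.

Lemma Linfnorm_ge0 (f : T -> K) : 0 <= Linfnorm P absK f.
Proof.
apply: ess_sup_gee.
  by rewrite (_ : _ [set: T] = 1) ?lte01 //; exact: probability_setT.
by apply: aeW => w; rewrite lee_fin (absK_ge0 lf).
Qed.

Lemma ae_absK_le_Linfnorm (f : T -> K) :
  \forall w \ae P, (absK (f w))%:E <= Linfnorm P absK f.
Proof. exact: ess_sup_ge. Qed.

Lemma Linfnorm_le (f : T -> K) (y : \bar R) :
  (\forall w \ae P, (absK (f w))%:E <= y) -> Linfnorm P absK f <= y.
Proof. by move=> fy; apply/ess_supP. Qed.

Lemma ae_absK_le_fine_Linfnorm (f : T -> K) : Linfnorm P absK f < +oo ->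
  \forall w \ae P, (absK (f w) <= fine (Linfnorm P absK f))%R.
Proof.
move=> flty; apply: filterS (ae_absK_le_Linfnorm f) => w.
by rewrite -lee_fin fineK // ge0_fin_numE // Linfnorm_ge0.
Qed.

Lemma Linfnorm_subC (X Y : T -> K) :
  Linfnorm P absK (fun w => (X w - Y w)%R) = Linfnorm P absK (fun w => (Y w - X w)%R).
Proof. by congr ess_sup; apply/funext => w; rewrite (absK_subC lf). Qed.

Lemma Linfnorm_sub_lty (X Y : T -> K) :
  Linfnorm P absK X < +oo -> Linfnorm P absK Y < +oo ->
  Linfnorm P absK (fun w => (X w - Y w)%R) < +oo.
Proof.
move=> Xlty Ylty.
apply: (@le_lt_trans _ _ (maxe (Linfnorm P absK X) (Linfnorm P absK Y))).
  apply: Linfnorm_le.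
  apply: filterS2 (ae_absK_le_Linfnorm X) (ae_absK_le_Linfnorm Y) => w Xw Yw.
  apply: (@le_trans _ _ (Num.max (absK (X w)) (absK (- Y w)))%:E).
    by rewrite lee_fin (absK_ultra lf).
  by rewrite (absKN lf) EFin_max ge_max !le_max Xw Yw orbT.
by rewrite gt_max Xlty Ylty.
Qed.

Lemma Linf_subset (G1 G2 : set (set T)) (Z : T -> K) :
  G1 `<=` G2 -> Linf P absK G1 Z -> Linf P absK G2 Z.
Proof. by move=> G12 [mZ Zlty]; split => //; exact: Kmeasurable_subset mZ. Qed.

Lemma Linfnorm_cond_exp_le (G : set (set T)) (X Y Z : T -> K) :
  sub_sigma_field G ->
  Linf P absK measurable X -> in_cond_exp P absK G X Y -> Linf P absK G Z ->
  Linfnorm P absK (fun w => (X w - Y w)%R) <= Linfnorm P absK (fun w => (X w - Z w)%R).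
Proof.
move=> hG [mX Xlty] [[mY Ylty] minY] hZ; have [mZ Zlty] := hZ.
have absKf_ge0 (f : T -> K) w : (0 <= absK (f w))%R := absK_ge0 lf (f w).
have mS1 := measurable_absK_sub lf mX (Kmeasurable_subset hG.2 mY).
have mS2 := measurable_absK_sub lf mX (Kmeasurable_subset hG.2 mZ).
have XZ_lty := Linfnorm_sub_lty Xlty Zlty.
set b := fine (Linfnorm P absK (fun w => (X w - Z w)%R)).
have b0 : (0 <= b)%R by rewrite fine_ge0 // Linfnorm_ge0.
have S2b := ae_absK_le_fine_Linfnorm XZ_lty.
have [Y1 [ceY1 Y1_ge0 M1]] := cond_esssup_exists hG mS1 (absKf_ge0 _)
  (ae_absK_le_fine_Linfnorm (Linfnorm_sub_lty Xlty Ylty)).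
have [Y2 [ceY2 Y2_ge0 M2]] := cond_esssup_exists hG mS2 (absKf_ge0 _) S2b.
have M2b := cond_esssup_le hG mS2 (absKf_ge0 _) b0 Y2_ge0 ceY2 S2b.
have M1b : \forall w \ae P, cond_esssup_of Y1 w <= b%:E.
  by apply: filterS2 (minY Z hZ _ _ M1 M2) M2b => w; exact: le_trans.
have S1b := ae_le_of_moments_le mS1 (absKf_ge0 _) b0
  (moments_le_of_cond_esssup_le hG b0 Y1_ge0 ceY1 M1b).
rewrite -[leRHS]fineK ?ge0_fin_numE ?Linfnorm_ge0 //.
by apply: Linfnorm_le; apply: filterS S1b => w; rewrite lee_fin.
Qed.

Lemma ae_cvg0_of_Linfnorm_lt (f : nat -> T -> K) :
  (forall e : R, (0 < e)%R -> \forall n \near \oo, Linfnorm P absK (f n) < e%:E) ->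
  \forall w \ae P, (fun n => absK (f n w)) @ \oo --> 0%R.
Proof.
move=> flte; apply: filterS (ae_foralln (fun n => ae_absK_le_Linfnorm (f n))) => w fw.
apply/cvgr0Pnorm_lt => e e0; apply: filterS (flte e e0) => n fne.
by rewrite ger0_norm ?(absK_ge0 lf) // -lte_fin (le_lt_trans (fw n)).
Qed.

End EssentialSupremumNorm.

Unset Implicit Arguments.
Set Strict Implicit.

Theorem mainTheorem19 (R : realType) (K : fieldType) (absK : K -> R)
  (d : measure_display) (T : measurableType d) (P : probability T R)
  (F : nat -> set (set T)) (X : T -> K) (Xn : nat -> T -> K) :
  is_local_field absK ->
  (forall n, sub_sigma_field (F n)) ->
  (forall n A, F n A -> F n.+1 A) ->
  Linf P absK measurable X ->
  (forall n, in_cond_exp P absK (F n) X (Xn n)) ->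
  (forall e : R, 0 < e -> exists n, (1 <= n)%N /\
     exists Z, Linf P absK (F n) Z /\ (Linfnorm P absK (fun w => (X w - Z w)%R) < e%:E)%E) ->
  (Linfnorm P absK (fun w => Xn n w - X w)) @[n --> \oo] --> 0%E /\
  {ae P, forall w, (fun n => absK (Xn n w - X w)) @ \oo --> 0}.
Proof.
move=> lf hF Fsub hX hXn approxX.
have Fmono : {homo F : m n / (m <= n)%N >-> m `<=` n}.
  apply: homo_leq => [A|B A C|n]; first exact: subset_refl.
  - exact: subset_trans.
  - exact: Fsub.
have Xn_lt (e : R) : 0 < e ->
    \forall n \near \oo, (Linfnorm P absK (fun w => (Xn n w - X w)%R) < e%:E)%E.
  move=> e0; have [m [_ [Z [hZ XZe]]]] := approxX e e0.
  near=> n; rewrite (Linfnorm_subC lf); apply: le_lt_trans XZe.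
  have mn : (m <= n)%N by near: n; exact: nbhs_infty_ge.
  exact: (Linfnorm_cond_exp_le lf (hF n) hX (hXn n) (Linf_subset (Fmono m n mn) hZ)).
split; first by apply: ecvg0_ge0 => // n; exact: Linfnorm_ge0.
exact: ae_cvg0_of_Linfnorm_lt.
Unshelve. all: by end_near.
Qed.
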